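(* Let $S$ be the set of matrices $C \in \mathbb{F}_2^{4\times 4}$ with $\mathrm{rank}_{\mathbb{F}_2}(C)=4$ that are not $(2,2)$-Hadamard expressible over $\mathbb{F}_2$ (this set has $5{,}304$ elements). For every $C \in S$, regarding $C$ as an integer matrix with entries in $\{0,1\}$, there do not exist integer matrices $A, B \in \mathbb{Z}^{4\times 4}$ with $\mathrm{rank}(A) \le 2$ and $\mathrm{rank}(B) \le 2$ such that $C = A \circ B$ (entrywise product in $\mathbb{Z}$). That is, every element of $S$ remains a counterexample over $\mathbb{Z}$.
   Context: The Hadamard product of two $m\times n$ matrices $A=(a_{ij})$ and $B=(b_{ij})$ is the $m\times n$ matrix $A\circ B=(a_{ij}b_{ij})$. A matrix $M \in \mathbb{F}_2^{4\times 4}$ is called $(2,2)$-Hadamard expressible over $\mathbb{F}_2$ if there exist $A, B \in \mathbb{F}_2^{4\times 4}$ with $\mathrm{rank}_{\mathbb{F}_2}(A) \le 2$ and $\mathrm{rank}_{\mathbb{F}_2}(B) \le 2$ such that $M = A\circ B$. For integer matrices, rank means rank over $\mathbb{Q}$ (equivalently over $\mathbb{R}$). *)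

From mathcomp Require Import all_boot all_order all_algebra.
Set Implicit Arguments. Unset Strict Implicit. Unset Printing Implicit Defensive.
Import GRing.Theory Num.Theory.
Local Open Scope ring_scope.

Definition hadamard (R : pzRingType) (m n : nat) (A B : 'M[R]_(m, n)) : 'M[R]_(m, n) :=
  \matrix_(i, j) (A i j * B i j).

Definition hadamard22_F2 (M : 'M['F_2]_4) : Prop :=
  exists A B : 'M['F_2]_4,
    (\rank A <= 2)%N /\ (\rank B <= 2)%N /\ M = hadamard A B.

Definition rankZ (m n : nat) (A : 'M[int]_(m, n)) : nat :=
  \rank (map_mx (fun z : int => z%:~R : rat) A).

Definition liftF2 (m n : nat) (C : 'M['F_2]_(m, n)) : 'M[int]_(m, n) :=
  \matrix_(i, j) ((nat_of_ord (C i j))%:Z).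

(** Reducing an integer decomposition [liftF2 C = A o B] modulo 2 gives a
    decomposition of [C] over F_2, because reduction is a ring morphism: it
    commutes with the Hadamard product and sends [liftF2 C] back to [C].  It
    cannot increase rank: a nonsingular k x k minor of the reduction has an
    odd, hence nonzero, integer determinant, so the rational rank is at least
    k. *)
From mathcomp Require Import all_boot all_order all_algebra.
Import GRing.Theory Num.Theory.
Local Open Scope ring_scope.
Set Implicit Arguments. Unset Strict Implicit.

Section UnitMinors.
Variable F : fieldType.

Lemma mxrank_mxsub m n m' n' (f : 'I_m' -> 'I_m) (g : 'I_n' -> 'I_n)
    (M : 'M[F]_(m, n)) :
  (\rank (mxsub f g M) <= \rank M)%N.
Proof.
have -> : mxsub f g M = rowsub f 1%:M *m M *m colsub g 1%:M.
  by rewrite -mulmxA mulmx_colsub mulmx1 -mxsub_mul mul1mx.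
exact: leq_trans (mxrankM_maxl _ _) (mxrankM_maxr _ _).
Qed.

Lemma unit_minor_mxrank m n (M : 'M[F]_(m, n)) :
  exists f : 'I_(\rank M) -> 'I_m, exists g : 'I_(\rank M) -> 'I_n,
    mxsub f g M \in unitmx.
Proof.
set Mr := rowsub (maxrankfun M) M.
have fullMrT : row_full Mr^T by rewrite /row_full mxrank_tr; exact: maxrowsub_free.
exists (maxrankfun M), (fullrankfun fullMrT).
rewrite -unitmx_tr; have := fullrowsub_unit fullMrT.
by congr (_ \in unitmx); apply/matrixP => i j; rewrite !mxE.
Qed.

(* Laplace expansion along the first row: some term, hence some cofactor, is nonzero. *)
Lemma unit_minor_drop k (N : 'M[F]_k.+1) : N \in unitmx ->
  exists f : 'I_k -> 'I_k.+1, exists g : 'I_k -> 'I_k.+1, mxsub f g N \in unitmx.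
Proof.
rewrite unitmxE unitfE (expand_det_row _ ord0) => detN_neq0.
have [j termj_neq0] : exists j, N ord0 j * cofactor N ord0 j != 0.
  apply/existsP; apply: contraNT detN_neq0; rewrite negb_exists => /forallP term0.
  by apply/eqP/big1 => j _; apply/eqP; rewrite -[_ == 0]negbK term0.
exists (lift ord0), (lift j); rewrite unitmxE unitfE.
move: termj_neq0; rewrite /cofactor !mulf_eq0 !negb_or => /and3P[_ _].
by rewrite row'Esub col'Esub -mxsubrc.
Qed.

Lemma unit_minor_leq_mxrank m n (M : 'M[F]_(m, n)) k : (k <= \rank M)%N ->
  exists f : 'I_k -> 'I_m, exists g : 'I_k -> 'I_n, mxsub f g M \in unitmx.
Proof.
move=> /subnK; move: (\rank M - k)%N => d; elim: d k => [|d IHd] k.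
  by rewrite add0n => ->; exact: unit_minor_mxrank.
rewrite addSnnS => /IHd[f [g /unit_minor_drop[f' [g' unit_minor]]]].
by exists (f \o f'), (g \o g'); rewrite mxsub_comp.
Qed.

End UnitMinors.

Lemma mxrank_map_intr_le_rankZ (F : fieldType) m n (A : 'M[int]_(m, n)) :
  (\rank (map_mx (fun z : int => z%:~R : F) A) <= rankZ A)%N.
Proof.
have [f [g]] := unit_minor_leq_mxrank (leqnn (\rank (map_mx intr A : 'M[F]_(m, n)))).
rewrite -map_mxsub unitmxE unitfE det_map_mx /= => detFfg_neq0.
have detfg_neq0 : \det (mxsub f g A) != 0.
  by apply: contraNneq detFfg_neq0 => ->; rewrite mulr0z.
apply: leq_trans (mxrank_mxsub f g _); rewrite -map_mxsub mxrank_unit //.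
by rewrite unitmxE unitfE det_map_mx /= intr_eq0.
Qed.

Lemma map_hadamard (R S : pzRingType) (phi : {rmorphism R -> S}) m n
    (A B : 'M[R]_(m, n)) :
  map_mx phi (hadamard A B) = hadamard (map_mx phi A) (map_mx phi B).
Proof. by apply/matrixP => i j; rewrite !mxE rmorphM. Qed.

Lemma liftF2K m n (C : 'M['F_2]_(m, n)) :
  map_mx (fun z : int => z%:~R : 'F_2) (liftF2 C) = C.
Proof. by apply/matrixP => i j; rewrite !mxE -pmulrn natr_Zp. Qed.

Theorem mainTheorem2 (C : 'M['F_2]_4) :
  \rank C = 4%N -> ~ hadamard22_F2 C ->
  ~ (exists A B : 'M[int]_4,
        (rankZ A <= 2)%N /\ (rankZ B <= 2)%N /\ liftF2 C = hadamard A B).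
Proof.
move=> _ notF2 [A [B [rkA [rkB eqC]]]]; apply: notF2.
exists (map_mx intr A), (map_mx intr B).
split; first exact: leq_trans (mxrank_map_intr_le_rankZ _ A) rkA.
split; first exact: leq_trans (mxrank_map_intr_le_rankZ _ B) rkB.
by rewrite -[C]liftF2K eqC map_hadamard.
Qed.
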